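(* Let $\Bbbk$ be algebraically closed, $T$ a torus acting linearly on a finite-dimensional $\Bbbk$-vector space $V$, $X\subseteq\mathbb PV$ a closed $T$-invariant subscheme with $X^T$ finite, and $S:\mathbb G_m\to T$ with $X^S=X^T$. Let $F\subseteq X^T$ be the set of supporting fixed points. Then $X=\overline{\bigcup_{f\in F}X_f}=\bigcup_{f\in F}\overline{X_f}$. In particular, if $X$ has only one supporting fixed point $f$, then $X=\overline{X_f}$.
   Context: For $f\in X^T$, $X_f=\{x\in X:\lim_{z\to0}S(z)\cdot x=f\}$ is the B-B stratum. A point $f\in X^T$ is a supporting fixed point if $X_f$ contains a nonempty open subset of $X$. *)

From HB Require Import structures.
From mathcomp Require Import all_boot all_order all_algebra.
From mathcomp Require Import mpoly.
Set Implicit Arguments. Unset Strict Implicit. Unset Printing Implicit Defensive.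
Import Order.TTheory GRing.Theory Num.Theory.
Local Open Scope ring_scope.

(* V = k^n with a basis of T-weight vectors; T = G_m^r; points of PV are
   represented by nonzero vectors, sets of points by scaling-invariant
   predicates on vectors (all sets below are such cones). *)
Section BB.
Variables (k : closedFieldType) (n r : nat).

Definition vec := 'I_n -> k.

Definition nonzero (v : vec) : Prop := exists i, v i != 0.

Definition proj_eq (u v : vec) : Prop :=
  exists c : k, c != 0 /\ forall i, u i = c * v i.

Definition in_torus (t : 'I_r -> k) : Prop := forall j, t j != 0.

Definition act (w : 'I_n -> 'I_r -> int) (t : 'I_r -> k) (v : vec) : vec :=
  fun i => (\prod_(j < r) (t j) ^ (w i j)) * v i.

Definition cochar (s : 'I_r -> int) (z : k) : 'I_r -> k := fun j => z ^ (s j).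

Definition homogeneous (p : {mpoly k[n]}) : Prop :=
  exists d, p \is [in k[n], d.-homog].

Definition zeroset (I : {mpoly k[n]} -> Prop) (v : vec) : Prop :=
  nonzero v /\ forall p, I p -> p.@[v] = 0.

Definition pclosed (C : vec -> Prop) : Prop :=
  exists I : {mpoly k[n]} -> Prop,
    (forall p, I p -> homogeneous p) /\ forall v, C v <-> zeroset I v.

Definition zclosure (A : vec -> Prop) (v : vec) : Prop :=
  nonzero v /\ forall C, pclosed C -> (forall x, A x -> C x) -> C v.

Definition fixedT (w : 'I_n -> 'I_r -> int) (X : vec -> Prop) (v : vec) : Prop :=
  X v /\ forall t, in_torus t -> proj_eq (act w t v) v.

Definition fixedS (w : 'I_n -> 'I_r -> int) (s : 'I_r -> int)
    (X : vec -> Prop) (v : vec) : Prop :=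
  X v /\ forall z : k, z != 0 -> proj_eq (act w (cochar s z) v) v.

(* lim_{z -> 0} S(z).x = f : the orbit map G_m -> PV, z |-> S(z).x, extends
   to a morphism A^1 -> PV (given by polynomials gamma without common zero at
   0) whose value at 0 is f *)
Definition is_limit (w : 'I_n -> 'I_r -> int) (s : 'I_r -> int) (x f : vec) : Prop :=
  exists gamma : 'I_n -> {poly k},
    (forall z : k, z != 0 ->
        proj_eq (fun i => (gamma i).[z]) (act w (cochar s z) x)) /\
    nonzero (fun i => (gamma i).[0]) /\
    proj_eq (fun i => (gamma i).[0]) f.

Definition stratum (w : 'I_n -> 'I_r -> int) (s : 'I_r -> int)
    (X : vec -> Prop) (f : vec) (x : vec) : Prop :=
  X x /\ is_limit w s x f.

Definition supporting (w : 'I_n -> 'I_r -> int) (s : 'I_r -> int)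
    (X : vec -> Prop) (f : vec) : Prop :=
  fixedT w X f /\
  exists C, pclosed C /\ (exists x, X x /\ ~ C x) /\
    forall x, X x -> ~ C x -> stratum w s X f x.

End BB.

From HB Require Import structures.
From mathcomp Require Import all_boot all_order all_algebra.
From mathcomp Require Import mpoly.
From Stdlib Require Import Classical.
Import Order.TTheory GRing.Theory Num.Theory.
Local Open Scope ring_scope.
Set Implicit Arguments. Unset Strict Implicit. Unset Printing Implicit Defensive.

(* Every point x of X has a lowest S-weight d, and lim_{z -> 0} S(z).x is the
   weight-d part of x: it is the value at 0 of a polynomial curve through the
   S-orbit, so it lies in the closed S-invariant set X, and it is S-fixed, hence
   T-fixed.  Remembering the lowest weight and the fixed point reached cuts X
   into finitely many locally closed pieces, each contained in one stratum.  A
   nonempty open subset of X then contains a nonempty open subset lying in a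
   single piece, so every nonempty open subset of X meets the stratum of a
   supporting fixed point: the supporting strata are dense.  Since there are
   finitely many fixed points, the closure of their union is the union of
   their closures. *)

Section LocallyClosedCover.
Variables (T : Type) (Q : eqType) (closed : (T -> Prop) -> Prop).
Hypothesis closedU :
  forall A B, closed A -> closed B -> closed (fun x => A x \/ B x).
Variables (X : T -> Prop) (Z D : Q -> T -> Prop).
Hypotheses (closedZ : forall q, closed (Z q)) (closedD : forall q, closed (D q)).

Lemma open_sub_locally_closed_cover (qs : seq Q) C :
  closed C -> (exists x, X x /\ ~ C x) ->
  (forall x, X x -> ~ C x -> exists2 q, q \in qs & Z q x /\ ~ D q x) ->
  exists q C', [/\ closed C', exists x, X x /\ ~ C' x &
    forall x, X x -> ~ C' x -> [/\ ~ C x, Z q x & ~ D q x]].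
Proof.
elim: qs C => [|q qs IH] C cC [x0 [Xx0 Cx0]] cover.
  by have [q] := cover x0 Xx0 Cx0.
have cover_qs E : (forall x, X x -> ~ E x -> ~ C x /\ ~ (Z q x /\ ~ D q x)) ->
    forall x, X x -> ~ E x -> exists2 q', q' \in qs & Z q' x /\ ~ D q' x.
  move=> EC x Xx Ex; have [Cx ZDx] := EC x Xx Ex.
  have [q'] := cover x Xx Cx; rewrite in_cons => /orP[/eqP-> //|q'qs ZD].
  by exists q'.
have [[x1 [Xx1 Cx1 Zx1]]|allZ] := classic (exists x, [/\ X x, ~ C x & ~ Z q x]).
  have ex1 : exists x, X x /\ ~ (C x \/ Z q x) by exists x1; split=> // -[].
  have cover1 : forall x, X x -> ~ (C x \/ Z q x) ->
      exists2 q', q' \in qs & Z q' x /\ ~ D q' x.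
    by apply: cover_qs => x Xx /not_or_and [Cx Zx]; split=> // -[].
  have [q' [C' [cC' ex' sub']]] := IH _ (closedU cC (closedZ q)) ex1 cover1.
  exists q', C'; split=> // x Xx C'x.
  by have [/not_or_and [Cx _]] := sub' x Xx C'x.
have XZ x : X x -> ~ C x -> Z q x.
  by move=> Xx Cx; apply: NNPP => Zx; apply: allZ; exists x.
have [[x1 [Xx1 Cx1 Dx1]]|allD] := classic (exists x, [/\ X x, ~ C x & ~ D q x]).
  exists q, (fun x => C x \/ D q x); split; first exact: closedU.
    by exists x1; split=> // -[].
  by move=> x Xx /not_or_and [Cx Dx]; split=> //; apply: XZ.
apply: IH cC (ex_intro _ x0 (conj Xx0 Cx0)) _.
apply: cover_qs => x Xx Cx; split=> // [[_ Dx]].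
by apply: allD; exists x.
Qed.

End LocallyClosedCover.

Lemma poly_eq0_of_roots (k : closedFieldType) (p : {poly k}) :
  (forall z, p.[z] = 0) -> p = 0.
Proof.
move=> p0; apply/eqP; apply: contraT => pn0.
have [/eqP/size_poly1P [c c0 pc]|sp] := eqVneq (size p) 1%N.
  by move: (p0 0); rewrite pc hornerC => /eqP; rewrite (negbTE c0).
have sp2 : (1 < size p)%N by rewrite ltn_neqAle eq_sym sp lt0n size_poly_eq0.
have sp1 : size (p - 1) = size p by rewrite size_polyDl // size_polyN size_poly1.
have /closed_rootP [z] : size (p - 1) != 1%N by rewrite sp1.
by rewrite /root hornerD hornerN hornerC p0 sub0r oppr_eq0 oner_eq0.
Qed.

Lemma poly_eq0_on_units (k : closedFieldType) (p : {poly k}) :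
  (forall z, z != 0 -> p.[z] = 0) -> p = 0.
Proof.
move=> p0; suff /eqP : 'X * p = 0 by rewrite mulf_eq0 polyX_eq0 => /eqP.
apply: poly_eq0_of_roots => z; rewrite hornerM hornerX.
by have [->|/p0 ->] := eqVneq z 0; rewrite ?mul0r ?mulr0.
Qed.

Section ProjectiveSpace.
Variables (k : closedFieldType) (n : nat).
Implicit Types (u v x : vec k n) (A B C : vec k n -> Prop) (I J : {mpoly k[n]} -> Prop).

Lemma proj_eq_eqfun u v : u =1 v -> proj_eq u v.
Proof. by move=> uv; exists 1; split=> [|i]; rewrite ?oner_neq0 ?mul1r. Qed.

Lemma proj_eq_sym u v : proj_eq u v -> proj_eq v u.
Proof.
move=> [c [c0 hc]]; exists c^-1; split; first by rewrite invr_eq0.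
by move=> i; rewrite hc mulrA mulVf // mul1r.
Qed.

Lemma proj_eq_trans u v x : proj_eq u v -> proj_eq v x -> proj_eq u x.
Proof.
move=> [c [c0 hc]] [d [d0 hd]]; exists (c * d); split; first by rewrite mulf_neq0.
by move=> i; rewrite hc hd mulrA.
Qed.

Lemma meval_homog_scale (p : {mpoly k[n]}) d (c : k) v :
  p \is [in k[n], d.-homog] -> p.@[fun i => c * v i] = c ^+ d * p.@[v].
Proof.
move=> hp; rewrite !mevalE big_distrr /= big_seq [RHS]big_seq.
apply: eq_bigr => m hm.
have <- : (\sum_(i < n) m i)%N = d by rewrite -mdegE; exact: (dhomog_mf hp hm).
rewrite (eq_bigr (fun i => c ^+ m i * v i ^+ m i)); last by move=> i _; rewrite exprMn.
by rewrite big_split /= prodrXr mulrCA.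
Qed.

Lemma dhomogXi (i : 'I_n) : ('X_i : {mpoly k[n]}) \is [in k[n], 1.-homog].
Proof. by rewrite dhomogX; apply/eqP; exact: mdeg1. Qed.

Lemma zeroset_proj_eq I u v : (forall p, I p -> homogeneous p) ->
  proj_eq u v -> zeroset I v -> zeroset I u.
Proof.
move=> hI [c [c0 hc]] [[i vi] v0]; split=> [|p /[dup] /hI [d hd] Ip].
  by exists i; rewrite hc mulf_neq0.
by rewrite (meval_eq _ hc) (meval_homog_scale _ _ hd) v0 // mulr0.
Qed.

Lemma meval_poly_curve (p : {mpoly k[n]}) (gamma : 'I_n -> {poly k}) :
  exists q : {poly k}, forall z, q.[z] = p.@[fun i => (gamma i).[z]].
Proof.
exists (\sum_(m <- msupp p) p@_m *: \prod_(i < n) gamma i ^+ m i) => z.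
rewrite mevalE horner_sum; apply: eq_bigr => m _.
rewrite hornerZ horner_prod; congr (_ * _); apply: eq_bigr => i _.
exact: horner_exp.
Qed.

Lemma zeroset_curve0 I (gamma : 'I_n -> {poly k}) :
  (forall z, z != 0 -> zeroset I (fun i => (gamma i).[z])) ->
  nonzero (fun i => (gamma i).[0]) -> zeroset I (fun i => (gamma i).[0]).
Proof.
move=> Xgamma nz0; split=> // p Ip.
have [q qE] := meval_poly_curve p gamma.
suff q0 : q = 0 by rewrite -qE q0 horner0.
by apply: poly_eq0_on_units => z z0; rewrite qE; have [_ ->] := Xgamma z z0.
Qed.

Lemma pclosed_ext A B : pclosed A -> (forall v, A v <-> B v) -> pclosed B.
Proof. by move=> [I [hI AI]] AB; exists I; split=> // v; rewrite -AB. Qed.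

Lemma pclosed_zeroset I : (forall p, I p -> homogeneous p) -> pclosed (zeroset I).
Proof. by exists I. Qed.

Lemma pclosed0 : pclosed (fun _ : vec k n => False).
Proof.
exists (fun p => p = 1); split=> [p ->|v]; first by exists 0%N; exact: dhomog1.
split=> // [[_ /(_ 1 erefl)]].
by rewrite meval1 => /eqP; rewrite oner_eq0.
Qed.

Lemma pclosedU A B : pclosed A -> pclosed B -> pclosed (fun v => A v \/ B v).
Proof.
move=> [I1 [h1 e1]] [I2 [h2 e2]].
exists (fun p => exists p1 p2, [/\ I1 p1, I2 p2 & p = p1 * p2]); split.
  move=> _ [p1 [p2 [/h1 [d1 hd1] /h2 [d2 hd2] ->]]].
  by exists (d1 + d2)%N; apply: dhomogM.
move=> v; split.
  by case=> [/e1|/e2] [nz v0]; split=> // _ [p1 [p2 [i1 i2 ->]]];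
    rewrite mevalM ?(v0 _ i1) ?(v0 _ i2) ?mul0r ?mulr0.
move=> [nz v0]; rewrite e1 e2.
have [|nA] := classic (zeroset I1 v); [by left | right].
have [p1 [I1p1 p1v]] : exists p1, I1 p1 /\ p1.@[v] != 0.
  apply: NNPP => h; apply: nA; split=> // p1 I1p1.
  by apply: NNPP => /eqP p1v; apply: h; exists p1.
split=> // p2 I2p2; apply/eqP.
have /eqP := v0 (p1 * p2) (ex_intro _ p1 (ex_intro _ p2 (And3 I1p1 I2p2 erefl))).
by rewrite mevalM mulf_eq0 (negbTE p1v).
Qed.

Lemma pclosed_bigcup (J : finType) (C : J -> vec k n -> Prop) :
  (forall j, pclosed (C j)) -> pclosed (fun v => exists j, C j v).
Proof.
move=> cC.
suff /(_ (enum J)) : forall js : seq J, pclosed (fun v => exists2 j, j \in js & C j v).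
  by move/pclosed_ext; apply=> v; split=> [[j]|[j]]; exists j; rewrite ?mem_enum.
elim=> [|j js IH]; first by apply: (pclosed_ext pclosed0) => v; split=> // -[].
apply: (pclosed_ext (pclosedU (cC j) IH)) => v; split.
  case=> [|[j' j'js]]; first by exists j; rewrite ?mem_head.
  by exists j'; rewrite // in_cons j'js orbT.
by move=> [j']; rewrite in_cons => /orP[/eqP->|j'js Cv]; [left | right; exists j'].
Qed.

Lemma zclosure_min A C :
  pclosed C -> (forall v, A v -> C v) -> forall v, zclosure A v -> C v.
Proof. by move=> cC AC v [_]; apply. Qed.

Lemma zclosure_sup A v : nonzero v -> A v -> zclosure A v.
Proof. by move=> nz Av; split=> // C _; apply. Qed.

Lemma zclosure_mono A B :
  (forall v, A v -> B v) -> forall v, zclosure A v -> zclosure B v.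
Proof. by move=> AB v [nz Av]; split=> // C cC BC; apply: Av => // y /AB /BC. Qed.

Lemma pclosed_zclosure A : pclosed (zclosure A).
Proof.
exists (fun p => exists C J, [/\ forall q, J q -> homogeneous q,
  forall v, C v <-> zeroset J v, forall v, A v -> C v & J p]).
split=> [p [C [J [hJ _ _ /hJ //]]]|v]; split=> [[nz Av]|[nz Jv]]; split=> //.
  move=> p [C [J [hJ CJ AC Jp]]].
  by have /CJ [_ ->] := Av C (ex_intro _ J (conj hJ CJ)) AC.
move=> C [J [hJ CJ]] AC; apply/CJ; split=> // p Jp.
by apply: Jv; exists C, J.
Qed.

Lemma zclosure_finite_union (P : vec k n -> Prop) (A : vec k n -> vec k n -> Prop)
    (m : nat) (l : 'I_m -> vec k n) :
  (forall f, P f -> exists j, proj_eq f (l j)) ->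
  (forall f g y, A g y -> proj_eq g f -> A f y) ->
  (forall f y, A f y -> nonzero y) ->
  forall x, zclosure (fun y => exists f, P f /\ A f y) x ->
    exists f, P f /\ zclosure (A f) x.
Proof.
move=> Pl Aeq Anz x.
pose K j v := exists f, [/\ P f, proj_eq f (l j) & zclosure (A f) v].
have cK j : pclosed (K j).
  have [[f [Pf fj]]|none] := classic (exists f, P f /\ proj_eq f (l j)).
    apply: (pclosed_ext (pclosed_zclosure (A f))) => v.
    split=> [fv|[g [_ gj]]]; first by exists f.
    apply: zclosure_mono => y /Aeq; apply.
    exact: proj_eq_trans gj (proj_eq_sym fj).
  apply: (pclosed_ext pclosed0) => v; split=> // -[f [Pf fj _]].
  by apply: none; exists f.
move=> /(zclosure_min (pclosed_bigcup cK)) [y [f [Pf Afy]]|j [f [Pf _ Afx]]].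
  have [j fj] := Pl f Pf; exists j, f.
  by split=> //; apply: zclosure_sup (Anz _ _ Afy) Afy.
by exists f.
Qed.
End ProjectiveSpace.

Section Strata.
Variables (k : closedFieldType) (n r : nat).
Variables (w : 'I_n -> 'I_r -> int) (s : 'I_r -> int).
Implicit Types (x u v : vec k n) (d : int) (z : k).

Definition sweight (i : 'I_n) : int := \sum_(j < r) s j * w i j.

Definition weight_part d x : vec k n :=
  fun i => if sweight i == d then x i else 0.

Definition lowest_weight d x : Prop :=
  (forall i, sweight i < d -> x i = 0) /\ exists i, sweight i = d /\ x i != 0.

Lemma exists_lowest_weight x : nonzero x -> exists d, lowest_weight d x.
Proof.
move=> [i0 xi0].
have [i' xi' i'min] := @arg_minP _ _ _ i0 (fun i => x i != 0) sweight xi0.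
exists (sweight i'); split; last by exists i'.
move=> j ltj; apply/eqP; apply: contraTT ltj => xj.
by rewrite -leNgt i'min.
Qed.

Lemma act_cochar z x i :
  z != 0 -> act w (cochar s z) x i = z ^ sweight i * x i.
Proof.
move=> z0; rewrite /act /cochar /sweight; congr (_ * _).
elim/big_rec2: _ => [|j y1 y2 _ ->]; first by rewrite expr0z.
by rewrite exprz_exp expfzDr.
Qed.

Lemma in_torus_cochar z : z != 0 -> in_torus (cochar s z).
Proof. by move=> z0 j; rewrite /cochar expfz_neq0. Qed.

Definition weight_curve d x (i : 'I_n) : {poly k} :=
  (x i)%:P * 'X^(absz (sweight i - d)).

Lemma weight_curve_proj_eq d x z : (forall i, sweight i < d -> x i = 0) ->
  z != 0 -> proj_eq (fun i => (weight_curve d x i).[z]) (act w (cochar s z) x).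
Proof.
move=> low z0; exists (z ^ (- d)); split=> [|i]; first by rewrite expfz_neq0.
rewrite hornerCM hornerXn act_cochar //.
have [->|xi0] := eqVneq (x i) 0; first by rewrite mul0r !mulr0.
have dle : d <= sweight i by rewrite leNgt; apply: contra xi0 => /low ->.
rewrite exprnP gez0_abs ?subr_ge0 // expfzDr //.
by rewrite mulrC (mulrC (z ^ sweight i)) -mulrA.
Qed.

Lemma weight_curve0 d x i : (weight_curve d x i).[0] = weight_part d x i.
Proof.
rewrite hornerCM hornerXn expr0n /weight_part.
have [->|ne] := eqVneq (sweight i) d; first by rewrite subrr mulr1.
by rewrite absz_eq0 subr_eq0 (negbTE ne) mulr0.
Qed.

Lemma nonzero_weight_curve0 d x :
  lowest_weight d x -> nonzero (fun i => (weight_curve d x i).[0]).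
Proof.
by move=> [_ [i [wi xi]]]; exists i; rewrite weight_curve0 /weight_part wi eqxx.
Qed.

Lemma is_limit_weight_part d x :
  lowest_weight d x -> is_limit w s x (weight_part d x).
Proof.
move=> /[dup] low [low0 _]; exists (weight_curve d x); split.
  by move=> z; apply: weight_curve_proj_eq.
by split; [exact: nonzero_weight_curve0 | exact/proj_eq_eqfun/weight_curve0].
Qed.

Lemma is_limit_proj_eq x g f :
  is_limit w s x g -> proj_eq g f -> is_limit w s x f.
Proof.
by move=> [gamma [curve [nz0 lim]]] gf; exists gamma; split=> //; split=> //;
  apply: proj_eq_trans lim gf.
Qed.

Lemma stratum_proj_eq X x g f :
  stratum w s X g x -> proj_eq g f -> stratum w s X f x.
Proof. by move=> [Xx lim] gf; split=> //; apply: is_limit_proj_eq lim gf. Qed.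

Lemma fixedS_weight_part X d x :
  X (weight_part d x) -> fixedS w s X (weight_part d x).
Proof.
move=> Xx; split=> // z z0; exists (z ^ d); split=> [|i]; first by rewrite expfz_neq0.
by rewrite act_cochar // /weight_part; case: eqP => [->|]; rewrite ?mulr0.
Qed.

(* The pieces [cell i u] minus [cell_boundary i]: the lowest S-weight is that
   of the pivot coordinate i, and the part of that weight is proportional to
   the corresponding part of u. *)
Definition cell (i : 'I_n) u v : Prop :=
  [/\ nonzero v, u i != 0, forall i', sweight i' < sweight i -> v i' = 0 &
      forall i', sweight i' = sweight i -> v i' * u i = v i * u i'].

Definition cell_boundary (i : 'I_n) v : Prop :=
  nonzero v /\ forall i', sweight i' = sweight i -> v i' = 0.

Lemma pclosed_cell_boundary i : pclosed (cell_boundary i).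
Proof.
pose J (p : {mpoly k[n]}) := exists2 i', sweight i' = sweight i & p = 'X_i'.
have cJ : pclosed (zeroset J).
  by apply: pclosed_zeroset => _ [i' _ ->]; exists 1%N; exact: dhomogXi.
apply: (pclosed_ext cJ).
move=> v; split=> -[nz v0]; split=> //.
  by move=> i' wi'; have := v0 _ (ex_intro2 _ _ i' wi' erefl); rewrite mevalXU.
by move=> _ [i' wi' ->]; rewrite mevalXU v0.
Qed.

Lemma pclosed_cell i u : pclosed (cell i u).
Proof.
have [ui0|ui] := eqVneq (u i) 0.
  by apply: (pclosed_ext (@pclosed0 k n)) => v; split=> // -[_]; rewrite ui0 eqxx.
pose J (p : {mpoly k[n]}) := (exists2 i', sweight i' < sweight i & p = 'X_i') \/
  exists2 i', sweight i' = sweight i & p = u i *: 'X_i' - u i' *: 'X_i.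
have cJ : pclosed (zeroset J).
  apply: pclosed_zeroset => _ [[i' _ ->]|[i' _ ->]]; exists 1%N; first exact: dhomogXi.
  by apply: dhomogD; rewrite ?dhomogN; apply: dhomogZ; exact: dhomogXi.
apply: (pclosed_ext cJ).
move=> v; split=> [[nz v0]|[nz _ low minors]]; split=> //.
- move=> i' wi'.
  by have := v0 _ (or_introl (ex_intro2 _ _ i' wi' erefl)); rewrite mevalXU.
- move=> i' wi'; have /eqP := v0 _ (or_intror (ex_intro2 _ _ i' wi' erefl)).
  by rewrite mevalB !mevalZ !mevalXU subr_eq0 => /eqP; rewrite mulrC => ->; rewrite mulrC.
move=> _ [[i' wi' ->]|[i' wi' ->]]; first by rewrite mevalXU low.
by rewrite mevalB !mevalZ !mevalXU mulrC minors // mulrC subrr.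
Qed.

Section CellInterior.
Variables (i : 'I_n) (u v : vec k n).
Hypotheses (cell_v : cell i u v) (interior_v : ~ cell_boundary i v).

Lemma cell_pivot : v i != 0.
Proof.
have [nz ui _ minors] := cell_v; apply/negP => /eqP vi0.
apply: interior_v; split=> // i' wi'; apply/eqP.
by move: (minors i' wi'); rewrite vi0 mul0r => /eqP; rewrite mulf_eq0 (negbTE ui) orbF.
Qed.

Lemma cell_lowest_weight : lowest_weight (sweight i) v.
Proof. by have [_ _ low _] := cell_v; split=> //; exists i; rewrite cell_pivot. Qed.

Lemma cell_weight_part :
  proj_eq (weight_part (sweight i) v) (weight_part (sweight i) u).
Proof.
have [_ ui _ minors] := cell_v.
exists (v i / u i); split=> [|i']; first by rewrite mulf_neq0 ?invr_eq0 ?cell_pivot.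
rewrite /weight_part; case: eqP => [wi'|_]; last by rewrite mulr0.
by apply: (mulIf ui); rewrite minors // mulrAC divfK.
Qed.

End CellInterior.

Lemma cell_is_limit i u x0 x :
  cell i u x0 -> ~ cell_boundary i x0 -> cell i u x -> ~ cell_boundary i x ->
  is_limit w s x (weight_part (sweight i) x0).
Proof.
move=> c0 b0 c b.
apply: is_limit_proj_eq (is_limit_weight_part (cell_lowest_weight c b)) _.
exact: proj_eq_trans (cell_weight_part c b) (proj_eq_sym (cell_weight_part c0 b0)).
Qed.

Section Invariant.
Variable I : {mpoly k[n]} -> Prop.
Hypothesis homogI : forall p, I p -> homogeneous p.
Hypothesis invI : forall t, in_torus t -> forall v, zeroset I v -> zeroset I (act w t v).

Lemma zeroset_weight_part d x :
  zeroset I x -> lowest_weight d x -> zeroset I (weight_part d x).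
Proof.
move=> Xx /[dup] low [low0 _].
apply: (zeroset_proj_eq homogI (proj_eq_sym (proj_eq_eqfun (weight_curve0 d x)))).
apply: zeroset_curve0 (nonzero_weight_curve0 low) => z z0.
exact: zeroset_proj_eq homogI (weight_curve_proj_eq low0 z0)
  (invI (in_torus_cochar z0) Xx).
Qed.

Hypothesis fixedS_fixedT :
  forall v, fixedS w s (zeroset I) v -> fixedT w (zeroset I) v.

Lemma fixedT_weight_part d x :
  zeroset I x -> lowest_weight d x -> fixedT w (zeroset I) (weight_part d x).
Proof. by move=> Xx low; apply/fixedS_fixedT/fixedS_weight_part/zeroset_weight_part. Qed.

Variables (m : nat) (l : 'I_m -> vec k n).
Hypothesis fixed_reps :
  forall v, fixedT w (zeroset I) v -> exists j, proj_eq v (l j).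

Lemma cell_cover x : zeroset I x ->
  exists i j, cell i (l j) x /\ ~ cell_boundary i x.
Proof.
move=> Xx; have [d /[dup] low [low0 [i [wi xi]]]] := exists_lowest_weight (proj1 Xx).
have [j [c [_ lE]]] := fixed_reps (fixedT_weight_part Xx low).
have xE i' : sweight i' = d -> x i' = c * l j i'.
  by move=> wi'; rewrite -lE /weight_part wi' eqxx.
have lji : l j i != 0 by apply: contraNneq xi => lji0; rewrite xE // lji0 mulr0.
exists i, j; split; last by move=> [_ /(_ i erefl)] /eqP; rewrite (negbTE xi).
split=> // [|i'|i' wi']; rewrite ?wi; [exact: (proj1 Xx) | exact: low0 | ].
by rewrite wi in wi'; rewrite !xE // mulrAC.
Qed.

Lemma supporting_strata_dense C : pclosed C -> (exists x, zeroset I x /\ ~ C x) ->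
  exists f y, [/\ supporting w s (zeroset I) f, stratum w s (zeroset I) f y & ~ C y].
Proof.
move=> cC nonempty.
have [[i j] [C' [cC' [x0 [Xx0 C'x0]] interior]]] :=
  open_sub_locally_closed_cover (@pclosedU k n) (X := zeroset I)
    (Z := fun q => cell q.1 (l q.2)) (D := fun q => cell_boundary q.1)
    (fun q => pclosed_cell q.1 (l q.2)) (fun q => pclosed_cell_boundary q.1)
    (qs := enum {: 'I_n * 'I_m}) cC nonempty
    (fun x Xx _ => let: ex_intro i (ex_intro j cx) := cell_cover Xx in
                   ex_intro2 _ _ (i, j) (mem_enum _ _) cx).
have [Cx0 c0 b0] := interior x0 Xx0 C'x0.
have strat x :
    zeroset I x -> ~ C' x -> stratum w s (zeroset I) (weight_part (sweight i) x0) x.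
  move=> Xx C'x; have [_ c b] := interior x Xx C'x.
  by split=> //; apply: cell_is_limit c b.
exists (weight_part (sweight i) x0), x0; split=> //; last exact: strat.
split; first exact: fixedT_weight_part Xx0 (cell_lowest_weight c0 b0).
by exists C'; split=> //; split=> //; exists x0.
Qed.

End Invariant.
End Strata.

Theorem lemma3p1 (k : closedFieldType) (n r : nat)
    (w : 'I_n -> 'I_r -> int) (s : 'I_r -> int)
    (I : {mpoly k[n]} -> Prop)
    (hI : forall p, I p -> homogeneous p)
    (hinv : forall t, in_torus t -> forall v,
        zeroset I v -> zeroset I (act w t v))
    (hfin : exists (m : nat) (l : 'I_m -> vec k n), forall v,
        fixedT w (zeroset I) v -> exists j, proj_eq v (l j))
    (hS : forall v, fixedS w s (zeroset I) v <-> fixedT w (zeroset I) v) :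
  let X := zeroset I in
  let F := supporting w s X in
  (forall x, X x <-> zclosure (fun y : vec k n => exists f : vec k n, F f /\ stratum w s X f y) x) /\
  (forall x, X x <-> exists f : vec k n, F f /\ zclosure (stratum w s X f) x) /\
  (forall f, F f -> (forall g, F g -> proj_eq g f) ->
     forall x, X x <-> zclosure (stratum w s X f) x).
Proof.
move=> X F; have [m [l reps]] := hfin.
have closedX : pclosed X := pclosed_zeroset hI.
have closure_in_X A : (forall y, A y -> X y) -> forall x, zclosure A x -> X x.
  exact: zclosure_min closedX.
have dense x : X x <-> zclosure (fun y => exists f, F f /\ stratum w s X f y) x.
  split=> [Xx|]; last by apply: closure_in_X => y [f [_ []]].
  split=> [|C cC sub]; first exact: (proj1 Xx).
  apply: NNPP => Cx.
  have [f [y [Ff sy Cy]]] := supporting_strata_dense hI hinv (fun v => (hS v).1) reps cC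
    (ex_intro _ x (conj Xx Cx)).
  by apply: Cy; apply: sub; exists f.
split=> //; split=> [x|f Ff unique x]; split.
- move/dense; apply: (zclosure_finite_union (l := l)).
  + by move=> g [fixed _]; apply: reps.
  + by move=> g g' y; apply: stratum_proj_eq.
  + by move=> g y [[]].
- by move=> [f' [_]]; apply: closure_in_X => y [].
- move/dense; apply: zclosure_mono => y [g [Fg sy]].
  exact: stratum_proj_eq sy (unique g Fg).
- by apply: closure_in_X => y [].
Qed.
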